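(* For every integer $n\ge 9$, $\mathrm{wdim}_4(K_n\times K_n)\le 2n+1+\lfloor n/4\rfloor$.
   Context: $K_n\times K_n$ is the direct product of two complete graphs on $n$ vertices: vertex set $[n]\times[n]$ with $[n]=\{1,\dots,n\}$, and $(i,j)$ adjacent to $(i',j')$ iff $i\ne i'$ and $j\ne j'$. For a connected graph $G$ with distance $d_G$, vertices $x,y,z$ and $S\subseteq V(G)$, let $\Delta_z(x,y)=|d_G(x,z)-d_G(y,z)|$ and $\Delta_S(x,y)=\sum_{z\in S}\Delta_z(x,y)$. A set $S$ is a weak $k$-resolving set if $\Delta_S(x,y)\ge k$ for all distinct $x,y\in V(G)$, and $\mathrm{wdim}_k(G)$ is the minimum cardinality of a weak $k$-resolving set of $G$. *)

From mathcomp Require Import all_boot.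
Set Implicit Arguments. Unset Strict Implicit. Unset Printing Implicit Defensive.

Section Graph.
Variable T : finType.
Variable e : rel T.

Fixpoint walkb (k : nat) (x y : T) : bool :=
  if k is k'.+1 then (x == y) || [exists z, e x z && walkb k' z y]
  else x == y.

(* graph distance: least k with a walk of length <= k from x to y.
   For a connected graph this is attained for some k < #|T|; the default
   #|T| is only used for disconnected pairs. *)
Definition gdist (x y : T) : nat :=
  \big[minn/#|T|]_(k < #|T| | walkb k x y) (k : nat).

Definition absdiff (a b : nat) : nat := if a <= b then b - a else a - b.

Definition Delta_z (z x y : T) : nat := absdiff (gdist x z) (gdist y z).

Definition Delta_S (S : {set T}) (x y : T) : nat := \sum_(z in S) Delta_z z x y.

Definition weak_resolving (k : nat) (S : {set T}) : bool :=
  [forall x, forall y, (x != y) ==> (k <= Delta_S S x y)].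

(* minimum cardinality of a weak k-resolving set (default #|T|.+1 if none exists) *)
Definition wdim (k : nat) : nat :=
  \big[minn/#|T|.+1]_(S : {set T} | weak_resolving k S) #|S|.
End Graph.

Definition KnKn_adj (n : nat) : rel ('I_n * 'I_n) :=
  fun x y => (x.1 != y.1) && (x.2 != y.2).

From mathcomp Require Import all_boot zify.

(* In K_n × K_n (n >= 3) the distance from z to x is 0, 1 or 2 and depends only on whether
   z shares the row and/or the column of x.  Summing the resulting pointwise bounds over S
   shows that S is weak 4-resolving as soon as every row and every column meets S at least
   twice and, whenever S contains three corners (i, j), (i, l), (k, j) of a rectangle, the
   four lines of the rectangle meet S at least 9 + [(k, l) ∈ S] times.  These conditions
   are local to diagonal blocks, so one may stack patterns along the diagonal: n/4 - 1
   copies of a 9-point pattern on a 4 × 4 block, then one pattern with at most 2s + 2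
   points on an s × s block, s = 4 + n mod 4.  This gives
   9 (n/4 - 1) + 2s + 2 = 2n + 1 + n/4 points. *)

Set Implicit Arguments. Unset Strict Implicit. Unset Printing Implicit Defensive.

Lemma bigmin_le (I : finType) (P : pred I) (F : I -> nat) N i :
  P i -> \big[minn/N]_(j | P j) F j <= F i.
Proof.
move=> Pi; elim: (index_enum I) (mem_index_enum i) => [//|j r IHr].
rewrite big_cons inE => /predU1P [<-|/IHr le_i]; first by rewrite Pi geq_minl.
by case: (P j) => //; apply: leq_trans (geq_minr _ _) le_i.
Qed.

Section GraphDistance.
Variables (T : finType) (e : rel T).

Lemma walkb1 x y : walkb e 1 x y = (x == y) || e x y.
Proof.
rewrite /=; congr (_ || _); apply/existsP/idP => [[z /andP [exz /eqP <-]] //|exy].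
by exists y; rewrite exy eqxx.
Qed.

Lemma gdist_eq x y d : d < #|T| -> walkb e d x y ->
  (forall k, k < d -> ~~ walkb e k x y) -> gdist e x y = d.
Proof.
move=> ltdT walk_d no_shorter; apply/eqP; rewrite eqn_leq; apply/andP; split.
  exact: (bigmin_le (fun k : 'I_#|T| => k : nat) _ (i := Ordinal ltdT)).
apply: (big_ind (leq d)) => [|a b da db|k walk_k]; first exact: ltnW.
  by rewrite leq_min da db.
by rewrite leqNgt; apply: contraL walk_k => /no_shorter.
Qed.

Lemma wdim_le k S : weak_resolving e k S -> wdim e k <= #|S|.
Proof. exact: bigmin_le. Qed.

End GraphDistance.

Lemma sum_eq_in (T : finType) (S : {set T}) x : \sum_(z in S) (z == x : nat) = (x \in S).
Proof.
have [xS|xNS] := boolP (x \in S).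
  by rewrite (bigD1 x) //= eqxx big1 // => z /andP [_ /negbTE ->].
by rewrite big1 // => z zS; apply/eqP; rewrite eqb0; apply: contraNneq xNS => <-.
Qed.

Lemma sum_mul_eq (I : finType) (F : I -> nat) i : \sum_a F a * (a == i) = F i.
Proof.
by rewrite (bigD1 i) //= eqxx muln1 big1 ?addn0 // => a /negbTE ->; rewrite muln0.
Qed.

Lemma count_iota_sum (p : pred nat) s : count p (iota 0 s) = \sum_(j < s) p j.
Proof.
by rewrite -sum1_count big_mkcond -(big_mkord xpredT (fun j => p j : nat)) /index_iota subn0.
Qed.

Lemma eq_both_neq (T : eqType) (x y z : T) : y != z -> ~~ ((x == y) && (x == z)).
Proof. by apply: contraNN => /andP [/eqP <- /eqP <-]. Qed.

Section Patterns.
Implicit Types (P Q B R : rel nat) (s a b q u v w x : nat).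

(* A pattern on an [s × s] block is a relation on [nat] of which only [[0, s) × [0, s)] is
   ever inspected. *)
Definition pattern_row P s u : nat := count (P u) (iota 0 s).
Definition pattern_col P s v : nat := count (P^~ v) (iota 0 s).
Definition pattern_size P s : nat := \sum_(0 <= u < s) pattern_row P s u.

Definition corner_bound P s u w v x : bool :=
  9 + P w x <= pattern_row P s u + pattern_row P s w + pattern_col P s v + pattern_col P s x.

Definition good_pattern s P : Prop :=
  [/\ forall u, u < s -> 2 <= pattern_row P s u,
      forall v, v < s -> 2 <= pattern_col P s v &
      forall u w v x, u < s -> w < s -> v < s -> x < s -> u != w -> v != x ->
        P u v -> P u x -> P w v -> corner_bound P s u w v x].

Definition good_patternb s P : bool :=
  let I := iota 0 s in
  [&& all (fun u => 2 <= pattern_row P s u) I, all (fun v => 2 <= pattern_col P s v) I &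
      all (fun u => all (fun w => all (fun v => all (fun x =>
        [==> u != w, v != x, P u v, P u x, P w v => corner_bound P s u w v x]) I) I) I) I].

Lemma good_patternP s P : good_patternb s P -> good_pattern s P.
Proof.
case/and3P => /allP rows /allP cols /allP corners; split.
- by move=> u us; apply: rows; rewrite mem_iota.
- by move=> v vs; apply: cols; rewrite mem_iota.
move=> u w v x us ws vs xs uw vx Puv Pux Pwv.
have mem y : y < s -> y \in iota 0 s by rewrite mem_iota.
move: (corners u (mem u us)) => /allP /(_ w (mem w ws)) /allP /(_ v (mem v vs)).
by move=> /allP /(_ x (mem x xs)); rewrite uw vx Puv Pux Pwv.
Qed.

Definition diag_sum a P Q : rel nat :=
  fun u v => if u < a then (v < a) && P u v else (a <= v) && Q (u - a) (v - a).

Lemma count_iota_add (p q r : pred nat) a b :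
  {in iota 0 a, p =1 q} -> {in iota 0 b, p \o addn a =1 r} ->
  count p (iota 0 (a + b)) = count q (iota 0 a) + count r (iota 0 b).
Proof.
move=> pq pr; rewrite iotaD count_cat (eq_in_count pq) add0n -(addn0 a) iotaDl addn0.
by rewrite count_map (eq_in_count pr).
Qed.

Lemma pattern_row_diag_sum a b P Q u :
  pattern_row (diag_sum a P Q) (a + b) u =
  if u < a then pattern_row P a u else pattern_row Q b (u - a).
Proof.
rewrite /pattern_row /diag_sum; case: ifP => ua.
  rewrite (@count_iota_add _ (P u) pred0) ?count_pred0 ?addn0 // => v.
    by rewrite mem_iota add0n => /andP [_ ->].
  by rewrite /= ltnNge leq_addr.
rewrite (@count_iota_add _ pred0 (Q (u - a))) ?count_pred0 // => v.
  by rewrite mem_iota add0n => /andP [_ va]; rewrite leqNgt va.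
by rewrite /= leq_addr addKn.
Qed.

Lemma pattern_col_diag_sum a b P Q v :
  pattern_col (diag_sum a P Q) (a + b) v =
  if v < a then pattern_col P a v else pattern_col Q b (v - a).
Proof.
rewrite /pattern_col /diag_sum; case: ifP => va.
  rewrite (@count_iota_add _ (P^~ v) pred0) ?count_pred0 ?addn0 // => u.
    by rewrite mem_iota add0n => /andP [_ ->].
  by rewrite /= ltnNge leq_addr /= leqNgt va.
rewrite (@count_iota_add _ pred0 (Q^~ (v - a))) ?count_pred0 // => u.
  by rewrite mem_iota add0n => /andP [_ ->].
by rewrite /= ltnNge leq_addr /= addKn leqNgt va.
Qed.

Lemma good_diag_sum a b P Q :
  good_pattern a P -> good_pattern b Q -> good_pattern (a + b) (diag_sum a P Q).
Proof.
case=> rowsP colsP cornerP [rowsQ colsQ cornerQ]; split.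
- move=> u ub; rewrite pattern_row_diag_sum.
  by case: (ltnP u a) => ua; [exact: rowsP | apply: rowsQ; lia].
- move=> v vb; rewrite pattern_col_diag_sum.
  by case: (ltnP v a) => va; [exact: colsP | apply: colsQ; lia].
move=> u w v x ub wb vb xb uw vx.
rewrite /corner_bound !pattern_row_diag_sum !pattern_col_diag_sum /diag_sum.
case: (ltnP u a) => ua; case: (ltnP w a) => wa; case: (ltnP v a) => va; case: (ltnP x a) => xa //=.
  exact: cornerP.
by move=> Puv Pux Pwv; apply: cornerQ => //; lia.
Qed.

Lemma pattern_size_diag_sum a b P Q :
  pattern_size (diag_sum a P Q) (a + b) = pattern_size P a + pattern_size Q b.
Proof.
rewrite /pattern_size (@big_cat_nat _ _ _ a) ?leq_addr //=.
congr (_ + _); first by apply: eq_big_nat => u /andP [_ ua]; rewrite pattern_row_diag_sum ua.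
rewrite -{1}(add0n a) big_addn addKn; apply: eq_big_nat => u _.
by rewrite pattern_row_diag_sum ltnNge leq_addl addnK.
Qed.

Lemma good_iter_diag_sum a B q s R : good_pattern a B -> good_pattern s R ->
  good_pattern (a * q + s) (iter q (diag_sum a B) R).
Proof.
move=> goodB goodR; elim: q => [|q IHq]; first by rewrite muln0.
by rewrite iterS mulnS -addnA; apply: good_diag_sum.
Qed.

Lemma pattern_size_iter_diag_sum a B q s R :
  pattern_size (iter q (diag_sum a B) R) (a * q + s) = pattern_size B a * q + pattern_size R s.
Proof.
elim: q => [|q IHq]; first by rewrite !muln0.
by rewrite iterS mulnS -addnA pattern_size_diag_sum IHq mulnS addnA.
Qed.

End Patterns.

(* The points [(0, v)], [(u, 0)] and [(u, u)] with [u, v > 0]: [3 (s - 1)] points on an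
   [s × s] block, which is within the budget [2 s + 2] only for [s <= 5]. *)
Definition star_diagonal : rel nat := fun u v => (u == 0) (+) (v == 0) || (u == v) && (u != 0).

Definition pattern_of (l : seq (nat * nat)) : rel nat := fun u v => (u, v) \in l.

Definition pattern6 : rel nat := pattern_of
  [:: (0, 1); (0, 2); (0, 5); (1, 0); (1, 4); (2, 1); (2, 4); (3, 2); (3, 5); (4, 0); (4, 3);
      (4, 4); (5, 3); (5, 5)].

Definition pattern7 : rel nat := pattern_of
  [:: (0, 3); (0, 4); (1, 3); (1, 5); (2, 0); (2, 6); (3, 1); (3, 2); (4, 4); (4, 5); (5, 2);
      (5, 5); (5, 6); (6, 0); (6, 1); (6, 4)].

Definition tail_pattern (r : nat) : rel nat :=
  match r with 0 | 1 => star_diagonal | 2 => pattern6 | _ => pattern7 end.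

Lemma good_star_diagonal4 : good_pattern 4 star_diagonal.
Proof. by apply: good_patternP; vm_compute. Qed.

Lemma pattern_size_star_diagonal4 : pattern_size star_diagonal 4 = 9.
Proof. by rewrite /pattern_size unlock. Qed.

Lemma good_tail_pattern r : r < 4 ->
  good_pattern (4 + r) (tail_pattern r) /\
  pattern_size (tail_pattern r) (4 + r) <= 2 * (4 + r) + 2.
Proof.
case: r => [|[|[|[|]]]] // _; split; rewrite /pattern_size ?unlock //.
all: by apply: good_patternP; vm_compute.
Qed.

Section KnKn.
Variable n : nat.
Hypothesis n_gt2 : 2 < n.
Local Notation V := ('I_n * 'I_n)%type.
Local Notation e := (@KnKn_adj n).

Lemma exists_ord_neq2 (a b : 'I_n) : exists c : 'I_n, (c != a) && (c != b).
Proof.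
have : [set a; b] \proper [set: 'I_n].
  rewrite properEcard subsetT cardsT card_ord cards2.
  by apply: leq_ltn_trans n_gt2; case: (a != b).
by case/properP => _ [c _]; rewrite !inE negb_or; exists c.
Qed.

Lemma walkb2_KnKn x y : walkb e 2 x y.
Proof.
suff walk_mid : [exists z, e x z && walkb e 1 z y] by rewrite /= walk_mid orbT.
apply/existsP.
have [exy|nexy] := boolP (e x y); first by exists y; rewrite walkb1 exy eqxx.
have [a /andP [a_x a_y]] := exists_ord_neq2 x.1 y.1.
have [b /andP [b_x b_y]] := exists_ord_neq2 x.2 y.2.
by exists (a, b); rewrite walkb1 /KnKn_adj /= ![_ == a]eq_sym ![_ == b]eq_sym a_x b_x a_y b_y orbT.
Qed.

Lemma gdist_KnKn x y : gdist e x y = if x == y then 0 else if e x y then 1 else 2.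
Proof.
have dist_eq d : d <= 2 -> walkb e d x y -> (forall k, k < d -> ~~ walkb e k x y) ->
    gdist e x y = d.
  by move=> le_d2; apply: gdist_eq; rewrite card_prod card_ord; nia.
have [exy|nxy] := eqVneq x y; first by subst y; apply: dist_eq => //; exact: eqxx.
have [exy|nexy] := boolP (e x y).
  by apply: dist_eq => [||[]] //; rewrite walkb1 exy orbT.
by apply: dist_eq (walkb2_KnKn x y) _ => // -[|[]] // _; rewrite walkb1 negb_or nxy.
Qed.

Definition coord_dist (same_row same_col : bool) : nat :=
  if same_row && same_col then 0 else if same_row || same_col then 2 else 1.

Lemma gdist_KnKn_coord i j a b : gdist e (i, j) (a, b) = coord_dist (a == i) (b == j).
Proof.
rewrite gdist_KnKn /coord_dist /KnKn_adj xpair_eqE /= (eq_sym i) (eq_sym j).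
by case: (a == i); case: (b == j).
Qed.

Lemma Delta_z_KnKn a b i j k l :
  Delta_z e (a, b) (i, j) (k, l) =
  absdiff (coord_dist (a == i) (b == j)) (coord_dist (a == k) (b == l)).
Proof. by rewrite /Delta_z !gdist_KnKn_coord. Qed.

Lemma absdiff_coord_dist_row (A B1 B2 : bool) :
  ~~ (B1 && B2) -> B1 + B2 <= absdiff (coord_dist A B1) (coord_dist A B2).
Proof. by case: A; case: B1; case: B2. Qed.

Lemma absdiff_coord_dist_col (A1 A2 B : bool) :
  ~~ (A1 && A2) -> A1 + A2 <= absdiff (coord_dist A1 B) (coord_dist A2 B).
Proof. by case: A1; case: A2; case: B. Qed.

Lemma absdiff_coord_dist (A1 A2 B1 B2 : bool) : ~~ (A1 && A2) -> ~~ (B1 && B2) ->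
  A1 + A2 + B1 + B2 <= absdiff (coord_dist A1 B1) (coord_dist A2 B2)
    + (A1 && B1) + (A2 && B2) + 2 * (A1 && B2) + 2 * (A2 && B1).
Proof. by case: A1; case: A2; case: B1; case: B2. Qed.

Definition row_count (S : {set V}) (i : 'I_n) : nat := \sum_(z in S) (z.1 == i : nat).
Definition col_count (S : {set V}) (j : 'I_n) : nat := \sum_(z in S) (z.2 == j : nat).

Lemma Delta_S_same_row S i j l : j != l ->
  col_count S j + col_count S l <= Delta_S e S (i, j) (i, l).
Proof.
move=> jl; rewrite -big_split; apply: leq_sum => -[a b] _.
by rewrite Delta_z_KnKn; apply/absdiff_coord_dist_row/eq_both_neq.
Qed.

Lemma Delta_S_same_col S i k j : i != k ->
  row_count S i + row_count S k <= Delta_S e S (i, j) (k, j).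
Proof.
move=> ik; rewrite -big_split; apply: leq_sum => -[a b] _.
by rewrite Delta_z_KnKn; apply/absdiff_coord_dist_col/eq_both_neq.
Qed.

Lemma Delta_S_corner S i k j l : i != k -> j != l ->
  row_count S i + row_count S k + col_count S j + col_count S l <=
  Delta_S e S (i, j) (k, l) + ((i, j) \in S) + ((k, l) \in S)
    + 2 * ((i, l) \in S) + 2 * ((k, j) \in S).
Proof.
move=> ik jl; rewrite -!sum_eq_in !big_distrr -!big_split; apply: leq_sum => -[a b] _.
rewrite Delta_z_KnKn !xpair_eqE.
exact/absdiff_coord_dist/eq_both_neq/jl/eq_both_neq.
Qed.

Lemma weak_resolving_KnKn S :
  (forall i, 2 <= row_count S i) -> (forall j, 2 <= col_count S j) ->
  (forall i k j l, i != k -> j != l -> (i, j) \in S -> (i, l) \in S -> (k, j) \in S ->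
     9 + ((k, l) \in S) <= row_count S i + row_count S k + col_count S j + col_count S l) ->
  weak_resolving e 4 S.
Proof.
move=> rows cols corner; apply/forallP => -[i j]; apply/forallP => -[k l].
apply/implyP; have [<- xy|ik _] := eqVneq i k.
  have jl : j != l by apply: contraNneq xy => ->.
  by apply: leq_trans (Delta_S_same_row S i jl); rewrite (leq_add (cols j) (cols l)).
have [<-|jl] := eqVneq j l.
  by apply: leq_trans (Delta_S_same_col S j ik); rewrite (leq_add (rows i) (rows k)).
have ki : k != i by rewrite eq_sym.
have lj : l != j by rewrite eq_sym.
have := Delta_S_corner S ik jl; have := corner _ _ _ _ ik jl; have := corner _ _ _ _ ki lj.
have := rows i; have := rows k; have := cols j; have := cols l.
move: (Delta_S _ _ _ _) ((i, j) \in S) ((k, l) \in S) ((i, l) \in S) ((k, j) \in S).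
by move=> D ij kl il kj; lia.
Qed.

Definition rel_set (P : rel nat) : {set V} := [set z : V | P z.1 z.2].

Lemma sum_rel_set P (F : V -> nat) :
  \sum_(z in rel_set P) F z = \sum_(a < n) \sum_(b < n) P a b * F (a, b).
Proof.
rewrite pair_big big_mkcond; apply: eq_bigr => -[a b] _.
by rewrite inE /=; case: (P a b); rewrite ?mul1n.
Qed.

Lemma row_count_rel_set P i : row_count (rel_set P) i = pattern_row P n i.
Proof.
rewrite /row_count /pattern_row sum_rel_set count_iota_sum exchange_big; apply: eq_bigr => b _.
exact: sum_mul_eq.
Qed.

Lemma col_count_rel_set P j : col_count (rel_set P) j = pattern_col P n j.
Proof.
rewrite /col_count /pattern_col sum_rel_set count_iota_sum; apply: eq_bigr => a _.
exact: sum_mul_eq.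
Qed.

Lemma card_rel_set P : #|rel_set P| = pattern_size P n.
Proof.
rewrite -sum1_card sum_rel_set /pattern_size big_mkord; apply: eq_bigr => a _.
by rewrite /pattern_row count_iota_sum; apply: eq_bigr => b _; rewrite muln1.
Qed.

Lemma wdim_KnKn_pattern P : good_pattern n P -> wdim e 4 <= pattern_size P n.
Proof.
case=> rows cols corner; rewrite -card_rel_set; apply/wdim_le/weak_resolving_KnKn.
- by move=> i; rewrite row_count_rel_set rows.
- by move=> j; rewrite col_count_rel_set cols.
move=> i k j l ik jl; rewrite !inE !row_count_rel_set !col_count_rel_set /=.
exact: corner.
Qed.

End KnKn.

Theorem mainTheorem5 (n : nat) (hn : 9 <= n) :
  @wdim _ (@KnKn_adj n) 4 <= 2 * n + 1 + n %/ 4.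
Proof.
have [q [r [lt_r4 def_n]]] : exists q r, r < 4 /\ n = 4 * q + (4 + r).
  by exists (n %/ 4 - 1), (n %% 4); lia.
have [good_tail size_tail] := good_tail_pattern lt_r4.
have good : good_pattern n (iter q (diag_sum 4 star_diagonal) (tail_pattern r)).
  by rewrite {1}def_n; apply: good_iter_diag_sum good_star_diagonal4 good_tail.
apply: leq_trans (wdim_KnKn_pattern _ good) _; first lia.
rewrite {1}def_n pattern_size_iter_diag_sum pattern_size_star_diagonal4; lia.
Qed.
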